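(* Let $\mathcal I$ and $\mathcal J$ be ideals on $\omega$ and let $X$ be a nonempty topological space. The following are equivalent: (1) $\mathcal I\subseteq\mathcal J$; (2) for every sequence $(f_n)$ in $\mathcal C(X)$: if $f_n\to0$ $\mathcal I$-uniformly then $f_n\to0$ $\mathcal J$-$\sigma$-uniformly; (3) for every $(f_n)$ in $\mathcal C(X)$: $\mathcal I$-uniform convergence to $0$ implies $\mathcal J$-quasi-normal convergence to $0$; (4) for every $(f_n)$ in $\mathcal C(X)$: $\mathcal I$-$\sigma$-uniform convergence to $0$ implies $\mathcal J$-quasi-normal convergence to $0$; (5) for every $(f_n)$ in $\mathcal C(X)$: $\mathcal I$-$\sigma$-uniform convergence to $0$ implies $\mathcal J$-pointwise convergence to $0$; (6) for every $(f_n)$ in $\mathcal C(X)$: $\mathcal I$-uniform convergence to $0$ implies $\mathcal J$-pointwise convergence to $0$; (7) for every $(f_n)$ in $\mathcal C(X)$: $\mathcal I$-quasi-normal convergence to $0$ implies $\mathcal J$-pointwise convergence to $0$.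
   Context: An ideal on $\omega$ is a family $\mathcal I\subseteq\mathcal P(\omega)$ closed under finite unions and subsets, containing all finite sets, with $\omega\notin\mathcal I$. A real sequence $(a_n)$ is $\mathcal I$-convergent to $0$ if $\{n:|a_n|\ge\varepsilon\}\in\mathcal I$ for all $\varepsilon>0$. For a sequence $(f_n)$ of real functions on a set $X$: $\mathcal I$-pointwise convergence to $0$ means $(f_n(x))$ is $\mathcal I$-convergent to $0$ for each $x$; $\mathcal I$-uniform means $\{n:\exists x\in X\,(|f_n(x)|\ge\varepsilon)\}\in\mathcal I$ for each $\varepsilon>0$; $\mathcal I$-$\sigma$-uniform means $X=\bigcup_{k\in\omega}X_k$ with $(f_n\restriction X_k)$ $\mathcal I$-uniformly convergent to $0$ for each $k$; $\mathcal I$-quasi-normal means there is a sequence $(\varepsilon_n)$ of positive reals $\mathcal I$-convergent to $0$ with $\{n:|f_n(x)|\ge\varepsilon_n\}\in\mathcal I$ for each $x$. $\mathcal C(X)$ = continuous real functions on $X$. *)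

From HB Require Import structures.
From mathcomp Require Import all_boot all_order all_algebra.
From mathcomp Require Import all_classical all_reals all_analysis.
From mathcomp Require Import Rstruct Rstruct_topology.
From Stdlib Require Import Reals.
Set Implicit Arguments. Unset Strict Implicit. Unset Printing Implicit Defensive.
Import Order.TTheory GRing.Theory Num.Theory.
Local Open Scope classical_set_scope.
Local Open Scope ring_scope.

Notation Rl := Rdefinitions.R.

Definition is_ideal (I : set (set nat)) : Prop :=
  (forall A B, I A -> I B -> I (A `|` B)) /\
  (forall A B, B `<=` A -> I A -> I B) /\
  (forall A : set nat, finite_set A -> I A) /\
  ~ I setT.

Definition Iconv0 (I : set (set nat)) (a : nat -> Rl) : Prop :=
  forall eps : Rl, 0 < eps -> I [set n | eps <= `|a n|].

Definition Cfun (X : topologicalType) (f : X -> Rl) : Prop := continuous f.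

Definition I_pointwise (X : Type) (I : set (set nat)) (f : nat -> X -> Rl) :=
  forall x : X, Iconv0 I (fun n => f n x).

Definition I_uniform_on (X : Type) (I : set (set nat)) (f : nat -> X -> Rl)
    (Y : set X) :=
  forall eps : Rl, 0 < eps -> I [set n | exists2 x, Y x & eps <= `|f n x|].

Definition I_uniform (X : Type) (I : set (set nat)) (f : nat -> X -> Rl) :=
  I_uniform_on I f setT.

Definition I_sigma_uniform (X : Type) (I : set (set nat)) (f : nat -> X -> Rl) :=
  exists Xk : nat -> set X, (\bigcup_k Xk k = setT) /\
    forall k, I_uniform_on I f (Xk k).

Definition I_quasi_normal (X : Type) (I : set (set nat)) (f : nat -> X -> Rl) :=
  exists e : nat -> Rl, (forall n, 0 < e n) /\ Iconv0 I e /\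
    forall x : X, I [set n | e n <= `|f n x|].

From HB Require Import structures.
From mathcomp Require Import all_boot all_order all_algebra.
From mathcomp Require Import all_classical all_reals all_analysis.
From mathcomp Require Import Rstruct Rstruct_topology.
Set Implicit Arguments. Unset Strict Implicit. Unset Printing Implicit Defensive.
Import Order.TTheory GRing.Theory Num.Theory.
Local Open Scope classical_set_scope.
Local Open Scope ring_scope.

(* For every ideal K, uniform => sigma-uniform => quasi-normal => pointwise
   K-convergence, and each mode is monotone in the ideal; this gives
   (1) => (2)-(7).  The only nontrivial step is sigma-uniform => quasi-normal:
   if X is the union of the X_k, let B_i be the set of n at which |f_n|
   reaches 1/(i+2) somewhere on X_0, ..., X_i, and let j_n be the first i < n
   with n in B_i (or n if there is none).  Then {n | j_n <= k} lies in
   {0..k} u B_0 u ... u B_k, which is in K, so eps_n = 1/(j_n+1) tends to 0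
   along K, while on X_k we have |f_n| < eps_n as soon as j_n > k.
   Conversely, for A in I the constant functions f_n = 1_A(n) converge
   I-uniformly, and their J-pointwise convergence forces A in J. *)

Section Ideal.
Variable K : set (set nat).
Hypothesis hK : is_ideal K.

Lemma idealU (A B : set nat) : K A -> K B -> K (A `|` B).
Proof. by case: hK => KU _; exact: KU. Qed.

Lemma ideal_sub (A B : set nat) : A `<=` B -> K B -> K A.
Proof. by case: hK => _ [subK _]; exact: subK. Qed.

Lemma ideal_finite (A : set nat) : finite_set A -> K A.
Proof. by case: hK => _ [_ [finK _]]; exact: finK. Qed.

Lemma ideal_bigcup_lt (U : nat -> set nat) (N : nat) :
  (forall i, K (U i)) -> K (\bigcup_(i < N) U i).
Proof.
move=> KU; elim: N => [|N IH].
  by rewrite II0 bigcup_set0; exact/ideal_finite/finite_set0.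
by rewrite IIS bigcup_setU bigcup_set1; exact: idealU.
Qed.

Lemma ideal_escape_index (B : nat -> set nat) : (forall i, K (B i)) ->
  exists j : nat -> nat,
    (forall k, K [set n | (j n <= k)%N]) /\ (forall n i, (i < j n)%N -> ~ B i n).
Proof.
move=> KB; pose j n := find (fun i => `[< B i n >]) (iota 0 n).
have le_jn n : (j n <= n)%N by rewrite -[leqRHS](size_iota 0) find_size.
exists j; split=> [k | n i lt_ij].
  apply: ideal_sub (idealU (ideal_finite (finite_II k.+1)) (ideal_bigcup_lt k.+1 KB)).
  move=> n /= le_jk; have [le_nk | lt_kn] := leqP n k; [by left | right].
  have lt_jn : (j n < n)%N by apply: leq_ltn_trans lt_kn.
  have has_n : has (fun i => `[< B i n >]) (iota 0 n) by rewrite has_find size_iota.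
  by exists (j n); [rewrite /= ltnS | have /asboolP := nth_find 0 has_n; rewrite nth_iota].
have lt_in : (i < n)%N := leq_trans lt_ij (le_jn n).
by have := before_find 0 lt_ij; rewrite nth_iota // add0n => /asboolPn.
Qed.

Lemma Iconv0_inv_succ (j : nat -> nat) :
  (forall k, K [set n | (j n <= k)%N]) -> Iconv0 K (fun n => ((j n).+1%:R)^-1).
Proof.
move=> j_large eps eps_gt0; pose N := Num.Def.archi_bound eps^-1.
have lt_N : eps^-1 < N%:R by rewrite archi_boundP // invr_ge0 ltW.
apply: (ideal_sub _ (j_large N)) => n /=; rewrite ger0_norm ?invr_ge0 // => le_eps.
have : (j n).+1%:R <= eps^-1.
  by rewrite -[_%:R]invrK lef_pV2 ?posrE ?invr_gt0 ?ltr0n.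
by move=> /le_lt_trans/(_ lt_N); rewrite ltr_nat => /ltnW/ltnW.
Qed.

End Ideal.

Section Modes.
Variable X : Type.
Implicit Types (I J K : set (set nat)) (f : nat -> X -> Rl).

Lemma uniform_sigma_uniform K f : I_uniform K f -> I_sigma_uniform K f.
Proof. by move=> unif; exists (fun=> setT); rewrite bigcup_const. Qed.

Lemma quasi_normal_pointwise K f :
  is_ideal K -> I_quasi_normal K f -> I_pointwise K f.
Proof.
move=> hK [e [e_gt0 [e_conv e_below]]] x eps eps_gt0.
apply: (ideal_sub hK _ (idealU hK (e_below x) (e_conv eps eps_gt0))) => n /= le_eps.
have [le_e | lt_e] := leP eps `|e n|; [by right | left].
by rewrite gtr0_norm // in lt_e; apply: le_trans le_eps; exact: ltW.
Qed.

Lemma sigma_uniform_quasi_normal K f :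
  is_ideal K -> I_sigma_uniform K f -> I_quasi_normal K f.
Proof.
move=> hK [Xk [cover unif]].
pose thr i : Rl := (i.+1%:R)^-1.
have thr_gt0 i : 0 < thr i by rewrite invr_gt0 ltr0n.
pose B i := \bigcup_(k < i.+1) [set n | exists2 x, Xk k x & thr i.+1 <= `|f n x|].
have [j [j_large j_escapes]] := ideal_escape_index hK (B := B)
  (fun i => ideal_bigcup_lt hK i.+1 (fun k => unif k _ (thr_gt0 i.+1))).
exists (thr \o j); split=> [n | ]; first exact: thr_gt0.
split=> [| x]; first exact: Iconv0_inv_succ.
have [k _ Xkx] : (\bigcup_k Xk k) x by rewrite cover.
apply: (ideal_sub hK _ (j_large k)) => n /= le_thr; rewrite leqNgt; apply/negP => lt_kj.
have [i ji] : exists i, j n = i.+1.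
  by exists (j n).-1; rewrite prednK // (leq_ltn_trans _ lt_kj).
apply: (j_escapes n i); first by rewrite ji.
by exists k; [rewrite /= -ji | exists x; rewrite // -ji].
Qed.

Lemma sigma_uniform_mono I J f :
  I `<=` J -> I_sigma_uniform I f -> I_sigma_uniform J f.
Proof. by move=> IJ [Xk [cover unif]]; exists Xk; split=> // k eps /(unif k)/IJ. Qed.

Lemma quasi_normal_mono I J f :
  I `<=` J -> I_quasi_normal I f -> I_quasi_normal J f.
Proof.
move=> IJ [e [e_gt0 [e_conv e_below]]]; exists e; split=> //.
by split=> [eps /e_conv | x]; apply: IJ.
Qed.

Lemma pointwise_mono I J f : I `<=` J -> I_pointwise I f -> I_pointwise J f.
Proof. by move=> IJ pw x eps /(pw x)/IJ. Qed.

End Modes.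

Definition indicator_seq (X : Type) (A : set nat) : nat -> X -> Rl :=
  fun n _ => \1_A n.

Lemma indicator_seq_continuous (X : topologicalType) (A : set nat) n :
  Cfun (@indicator_seq X A n).
Proof. exact: cst_continuous. Qed.

Lemma norm_indic (A : set nat) n : `|\1_A n : Rl| = (n \in A)%:R.
Proof. by rewrite indicE normr_nat. Qed.

Lemma uniform_indicator_seq (X : Type) K (A : set nat) :
  is_ideal K -> K A -> I_uniform K (@indicator_seq X A).
Proof.
move=> hK KA eps eps_gt0; apply: (ideal_sub hK _ KA) => n [x _].
rewrite norm_indic; have [/set_mem // | _] := boolP (n \in A).
by rewrite leNgt eps_gt0.
Qed.

Lemma pointwise_indicator_seq (X : Type) (x0 : X) K (A : set nat) :
  is_ideal K -> I_pointwise K (@indicator_seq X A) -> K A.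
Proof.
move=> hK pw; apply: (ideal_sub hK _ (pw x0 1 ltr01)) => n An /=.
by rewrite norm_indic mem_set.
Qed.

Lemma ideal_sub_iff_transfer (X : topologicalType) (x0 : X) (I J : set (set nat))
    (P Q : set (set nat) -> (nat -> X -> Rl) -> Prop) :
  is_ideal J ->
  (forall f, P I f -> Q I f) ->
  (forall f, I `<=` J -> Q I f -> Q J f) ->
  (forall f, Q J f -> I_pointwise J f) ->
  (forall A, I A -> P I (indicator_seq A)) ->
  I `<=` J <-> (forall f, (forall n, Cfun (f n)) -> P I f -> Q J f).
Proof.
move=> hJ PQ Q_mono Q_pw P_ind; split=> [IJ f _ Pf | transfer A IA].
  exact/Q_mono/PQ.
apply: (pointwise_indicator_seq x0 hJ); apply/Q_pw/transfer; last exact: P_ind.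
exact: indicator_seq_continuous.
Qed.

Theorem proposition3p2 (I J : set (set nat)) (X : topologicalType) (x0 : X) :
  is_ideal I -> is_ideal J ->
  let all_C (P : (nat -> X -> Rl) -> Prop) :=
    forall f : nat -> X -> Rl, (forall n, Cfun (f n)) -> P f in
  ((I `<=` J) <-> all_C (fun f => I_uniform I f -> I_sigma_uniform J f)) /\
  ((I `<=` J) <-> all_C (fun f => I_uniform I f -> I_quasi_normal J f)) /\
  ((I `<=` J) <-> all_C (fun f => I_sigma_uniform I f -> I_quasi_normal J f)) /\
  ((I `<=` J) <-> all_C (fun f => I_sigma_uniform I f -> I_pointwise J f)) /\
  ((I `<=` J) <-> all_C (fun f => I_uniform I f -> I_pointwise J f)) /\
  ((I `<=` J) <-> all_C (fun f => I_quasi_normal I f -> I_pointwise J f)).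
Proof.
move=> hI hJ all_C.
have U_S := @uniform_sigma_uniform X I.
have S_Q := @sigma_uniform_quasi_normal X I^~ hI.
have Q_P := @quasi_normal_pointwise X I^~ hI.
have U_Q f (Uf : I_uniform I f) := S_Q f (U_S f Uf).
have S_P f (Sf : I_sigma_uniform I f) := Q_P f (S_Q f Sf).
have U_P f (Uf : I_uniform I f) := S_P f (U_S f Uf).
have Q_P_J := @quasi_normal_pointwise X J^~ hJ.
have S_P_J f (Sf : I_sigma_uniform J f) := Q_P_J f (sigma_uniform_quasi_normal hJ Sf).
have P_P_J (f : nat -> X -> Rl) : I_pointwise J f -> I_pointwise J f := id.
have ind_U A : I A -> I_uniform I (@indicator_seq X A) := @uniform_indicator_seq X I A hI.
have ind_S A (IA : I A) := U_S _ (ind_U A IA).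
have ind_Q A (IA : I A) := S_Q _ (ind_S A IA).
have transfer := ideal_sub_iff_transfer x0 hJ.
split; first exact: transfer U_S (@sigma_uniform_mono X I J) S_P_J ind_U.
split; first exact: transfer U_Q (@quasi_normal_mono X I J) Q_P_J ind_U.
split; first exact: transfer S_Q (@quasi_normal_mono X I J) Q_P_J ind_S.
split; first exact: transfer S_P (@pointwise_mono X I J) P_P_J ind_S.
split; first exact: transfer U_P (@pointwise_mono X I J) P_P_J ind_U.
exact: transfer Q_P (@pointwise_mono X I J) P_P_J ind_Q.
Qed.
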